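(* Let $x\in\mathbb{R}^n$ have positive entries with $\max_{i,j}x_i/x_j\le b$, and let $y\in\mathbb{R}^n$ be nonnegative and nonzero. Then $$D(x,y)\le\min\left(1+\sqrt n,\,1+\sqrt b\right)\sqrt2\,\sin(x,y).$$
   Context: $\sin(x,y)$ is the sine of the angle between $x$ and $y$, and $$D(x,y)=\frac{\left\|\frac{y}{\|y\|_1}-\frac{x}{\|x\|_1}\right\|_2}{\left\|\frac{y}{\|y\|_1}\right\|_2}.$$ *)

From mathcomp Require Import all_boot all_order all_algebra.
From mathcomp Require Import reals.
Set Implicit Arguments. Unset Strict Implicit. Unset Printing Implicit Defensive.
Import Order.TTheory GRing.Theory Num.Theory.
Local Open Scope ring_scope.

Section Defs.
Variables (R : realType) (n : nat).

Definition norm1 (x : 'I_n -> R) : R := \sum_(i < n) `|x i|.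
Definition dotp (x y : 'I_n -> R) : R := \sum_(i < n) x i * y i.
Definition norm2 (x : 'I_n -> R) : R := Num.sqrt (dotp x x).

Definition cos_angle (x y : 'I_n -> R) : R := dotp x y / (norm2 x * norm2 y).
Definition sin_angle (x y : 'I_n -> R) : R := Num.sqrt (1 - cos_angle x y ^+ 2).

Definition Ddist (x y : 'I_n -> R) : R :=
  norm2 (fun i => y i / norm1 y - x i / norm1 x) / norm2 (fun i => y i / norm1 y).
End Defs.

From mathcomp Require Import all_boot all_order all_algebra.
From mathcomp Require Import reals.
From mathcomp Require Import ring.
Set Implicit Arguments.
Unset Strict Implicit.
Unset Printing Implicit Defensive.

Import Order.TTheory GRing.Theory Num.Theory.
Local Open Scope ring_scope.

(* Write S_x, S_y for the l1 norms, which are plain sums since the entries are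
   nonnegative. Then D(x,y)^2 S_x^2 |y|^2 = |y|^2 S_x^2 - 2 <x,y> S_x S_y + |x|^2 S_y^2,
   and nonnegativity of the Gram determinant of x, y and the all-ones vector
   bounds this by n (|x|^2 |y|^2 - <x,y>^2) = n |x|^2 |y|^2 sin(x,y)^2. Hence
   D(x,y) <= (sqrt n |x|_2 / |x|_1) sin(x,y), and the factor in front is at most
   sqrt n because |x|_2 <= |x|_1, and at most sqrt b because x_i <= b x_j. *)

Section InnerProduct.
Variables (R : realType) (n : nat).
Implicit Types (u v w z : 'I_n -> R) (a b c d : R).

Definition ones : 'I_n -> R := fun=> 1.

Lemma dotpC u v : dotp u v = dotp v u.
Proof. by apply: eq_bigr => i _; rewrite mulrC. Qed.

Lemma dotp_ones u : dotp u ones = \sum_(i < n) u i.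
Proof. by apply: eq_bigr => i _; rewrite mulr1. Qed.

Lemma dotp_ones_ones : dotp ones ones = n%:R.
Proof. by rewrite dotp_ones sumr_const card_ord. Qed.

Lemma dotp_ge0 u : 0 <= dotp u u.
Proof. by apply: sumr_ge0 => i _; rewrite -expr2 sqr_ge0. Qed.

Lemma dotp_gt0 u i : u i != 0 -> 0 < dotp u u.
Proof.
move=> ui_neq0; apply: (@lt_le_trans _ _ (u i * u i)).
  by rewrite lt0r mulf_neq0 //= -expr2 sqr_ge0.
rewrite /dotp (bigD1 i) //= lerDl.
by apply: sumr_ge0 => j _; rewrite -expr2 sqr_ge0.
Qed.

Lemma dotp_self_eq0 u z : dotp z z = 0 -> dotp u z = 0.
Proof.
move=> zz0; have z0 i : z i = 0.
  by have [//|/dotp_gt0] := eqVneq (z i) 0; rewrite zz0 ltxx.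
by apply: big1 => i _; rewrite z0 mulr0.
Qed.

Lemma dotpZ u w a c :
  dotp (fun i => u i * a) (fun i => w i * c) = a * c * dotp u w.
Proof. by rewrite /dotp mulr_sumr; apply: eq_bigr => i _; ring. Qed.

Lemma dotpB u v w z a b c d :
  dotp (fun i => u i * a - v i * b) (fun i => w i * c - z i * d) =
  a * c * dotp u w - a * d * dotp u z - b * c * dotp v w + b * d * dotp v z.
Proof.
rewrite /dotp !mulr_sumr -!sumrB -big_split /=.
by apply: eq_bigr => i _; ring.
Qed.

Lemma cauchy_schwarz u z : dotp u z ^+ 2 <= dotp u u * dotp z z.
Proof.
have [zz0|zz_neq0] := eqVneq (dotp z z) 0.
  by rewrite zz0 dotp_self_eq0 // expr0n mulr0.
have zz_gt0 : 0 < dotp z z by rewrite lt0r zz_neq0 dotp_ge0.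
(* the residual of u after projecting onto z, scaled by dotp z z *)
have := dotp_ge0 (fun i => u i * dotp z z - z i * dotp u z).
rewrite dotpB (dotpC z u).
have -> : forall A C Z : R, Z * Z * A - Z * C * C - C * Z * C + C * C * Z
                            = Z * (A * Z - C ^+ 2) by move=> *; ring.
by rewrite pmulr_rge0 // subr_ge0.
Qed.

Lemma gram_det3_ge0 u v e :
  dotp v v * dotp u e ^+ 2 - 2 * dotp u v * dotp u e * dotp v e
    + dotp u u * dotp v e ^+ 2
  <= dotp e e * (dotp u u * dotp v v - dotp u v ^+ 2).
Proof.
set E := dotp e e; have [E0|E_neq0] := eqVneq E 0.
  by rewrite E0 !(dotp_self_eq0 _ E0) expr0n /= !(mulr0, mul0r) subrr addr0.
have E_gt0 : 0 < E by rewrite lt0r E_neq0 dotp_ge0.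
(* Cauchy-Schwarz for the components of u and v orthogonal to e *)
pose proj w := fun i => w i * E - e i * dotp w e.
have proj_dotp w w' :
    dotp (proj w) (proj w') = E * (E * dotp w w' - dotp w e * dotp w' e).
  by rewrite dotpB (dotpC e w') -/E; ring.
have := cauchy_schwarz (proj u) (proj v).
rewrite !proj_dotp -subr_ge0 => cs.
rewrite -subr_ge0 -(pmulr_rge0 _ (exprn_gt0 3 E_gt0)).
by move: cs; congr (_ <= _); ring.
Qed.

End InnerProduct.

Arguments ones {R n}.

Section RelativeDistance.
Variables (R : realType) (n : nat).
Implicit Types (u v : 'I_n -> R).

Lemma norm1_ge0 u : 0 <= norm1 u.
Proof. by apply: sumr_ge0 => i _. Qed.

Lemma norm1_nneg u : (forall i, 0 <= u i) -> norm1 u = dotp u ones.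
Proof. by move=> u_ge0; rewrite dotp_ones; apply: eq_bigr => i _; rewrite ger0_norm. Qed.

Lemma le_norm1 u i : `|u i| <= norm1 u.
Proof.
by rewrite /norm1 (bigD1 i) //= lerDl; apply: sumr_ge0 => j _.
Qed.

Lemma norm1_gt0 u i : u i != 0 -> 0 < norm1 u.
Proof. by move=> ui_neq0; apply: lt_le_trans (le_norm1 u i); rewrite normr_gt0. Qed.

Lemma norm2_le_norm1 u : norm2 u <= norm1 u.
Proof.
rewrite /norm2 -(ger0_norm (norm1_ge0 u)) -sqrtr_sqr ler_wsqrtr //.
rewrite expr2 /dotp mulr_suml; apply: ler_sum => i _.
by rewrite (le_trans (ler_norm _)) // normrM ler_wpM2l ?le_norm1.
Qed.

Lemma sin_angle_sqr u v :
  sin_angle u v ^+ 2 = 1 - dotp u v ^+ 2 / (dotp u u * dotp v v).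
Proof.
have cos2 : cos_angle u v ^+ 2 = dotp u v ^+ 2 / (dotp u u * dotp v v).
  by rewrite /cos_angle /norm2 expr_div_n exprMn !sqr_sqrtr ?dotp_ge0.
rewrite /sin_angle cos2 sqr_sqrtr // subr_ge0.
have [->|uuvv_neq0] := eqVneq (dotp u u * dotp v v) 0; first by rewrite invr0 mulr0.
by rewrite ler_pdivrMr ?mul1r ?cauchy_schwarz // lt0r uuvv_neq0 mulr_ge0 ?dotp_ge0.
Qed.

Lemma Ddist_sqr u v : norm1 u != 0 -> norm1 v != 0 ->
  Ddist u v ^+ 2 =
    (dotp v v * norm1 u ^+ 2 - 2 * dotp u v * norm1 u * norm1 v
       + dotp u u * norm1 v ^+ 2) / (norm1 u ^+ 2 * dotp v v).
Proof.
move=> Su_neq0 Sv_neq0.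
rewrite /Ddist /norm2 expr_div_n !sqr_sqrtr ?dotp_ge0 // dotpB dotpZ (dotpC v u).
have [->|vv_neq0] := eqVneq (dotp v v) 0; first by rewrite !(mulr0, invr0).
by field; rewrite Su_neq0 Sv_neq0 vv_neq0.
Qed.

Lemma Ddist_le u v i j :
  (forall k, 0 <= u k) -> (forall k, 0 <= v k) -> u i != 0 -> v j != 0 ->
  Ddist u v <= Num.sqrt n%:R * norm2 u / norm1 u * sin_angle u v.
Proof.
move=> u_ge0 v_ge0 ui_neq0 vj_neq0.
have Su_gt0 := norm1_gt0 ui_neq0; have Sv_gt0 := norm1_gt0 vj_neq0.
have uu_gt0 := dotp_gt0 ui_neq0; have vv_gt0 := dotp_gt0 vj_neq0.
rewrite -ler_sqr ?nnegrE; last 2 first.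
- by rewrite divr_ge0 ?sqrtr_ge0.
- by rewrite !mulr_ge0 ?sqrtr_ge0 ?invr_ge0 ?ltW.
rewrite Ddist_sqr ?gt_eqF // !exprMn sin_angle_sqr /norm2 !sqr_sqrtr ?ler0n ?dotp_ge0 //.
have := gram_det3_ge0 u v ones.
rewrite dotp_ones_ones -!norm1_nneg // => gram.
have -> : n%:R * dotp u u * (norm1 u)^-1 ^+ 2 *
    (1 - dotp u v ^+ 2 / (dotp u u * dotp v v)) =
  n%:R * (dotp u u * dotp v v - dotp u v ^+ 2) / (norm1 u ^+ 2 * dotp v v).
  by field; rewrite !gt_eqF.
by apply: ler_wpM2r gram; rewrite invr_ge0 mulr_ge0 ?sqr_ge0 ?ltW.
Qed.

Lemma sqrtn_norm2_le u b : (forall i, 0 < u i) -> (forall i j, u i / u j <= b) ->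
  Num.sqrt n%:R * norm2 u <= Num.sqrt b * norm1 u.
Proof.
move=> u_gt0 ratio_le; have u_ge0 i := ltW (u_gt0 i).
have Su : norm1 u = \sum_(i < n) u i by rewrite norm1_nneg // dotp_ones.
have nX_le : n%:R * dotp u u <= norm1 u ^+ 2 * b.
  have -> : n%:R * dotp u u = \sum_(j < n) dotp u u.
    by rewrite sumr_const card_ord mulr_natl.
  rewrite expr2 -mulrA mulrC Su mulr_suml big_distrlr /=.
  apply: ler_sum => j _; apply: ler_sum => k _.
  by apply: ler_wpM2r => //; rewrite mulrC -ler_pdivrMr.
rewrite /norm2 -sqrtrM ?ler0n // [X in _ <= X]mulrC.
rewrite -(ger0_norm (norm1_ge0 u)) -sqrtr_sqr -sqrtrM ?sqr_ge0 //.
exact: ler_wsqrtr.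
Qed.

End RelativeDistance.

Theorem lemmaA4 (R : realType) (n : nat) (x y : 'I_n -> R) (b : R) :
  (forall i, 0 < x i) ->
  (forall i j, x i / x j <= b) ->
  (forall i, 0 <= y i) ->
  (exists i, y i != 0) ->
  Ddist x y <=
    Num.min (1 + Num.sqrt (n%:R)) (1 + Num.sqrt b) * Num.sqrt 2 * sin_angle x y.
Proof.
move=> x_gt0 ratio_le y_ge0 [i yi_neq0].
have x_ge0 k : 0 <= x k := ltW (x_gt0 k).
have xi_neq0 : x i != 0 := lt0r_neq0 (x_gt0 i).
have Sx_gt0 := norm1_gt0 xi_neq0.
set c := Num.sqrt n%:R * norm2 x / norm1 x.
have c_le_sqrtn : c <= Num.sqrt n%:R.
  by rewrite /c -mulrA ler_piMr ?sqrtr_ge0 // ler_pdivrMr ?mul1r ?norm2_le_norm1.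
have c_le_sqrtb : c <= Num.sqrt b by rewrite /c ler_pdivrMr ?sqrtn_norm2_le.
set M := Num.min _ _.
have c_le_M : c <= M by rewrite le_min !ler_wpDl.
have M_ge0 : 0 <= M.
  by apply: le_trans c_le_M; rewrite /c !mulr_ge0 ?sqrtr_ge0 ?invr_ge0 ?ltW.
have sqrt2_ge1 : 1 <= Num.sqrt 2 :> R by rewrite -{1}sqrtr1 ler_wsqrtr // ler1n.
apply: le_trans (Ddist_le x_ge0 y_ge0 xi_neq0 yi_neq0) _.
apply: ler_wpM2r; first exact: sqrtr_ge0.
exact: le_trans c_le_M (ler_peMr M_ge0 sqrt2_ge1).
Qed.
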